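(* Let $n\ge1$, $N:=n+1$, $B\in[1,n+1]$, per-sample losses $\ell_1,\dots,\ell_{NB}$ twice differentiable, and $\pi$ a uniformly random permutation of $[1,NB]$. Then $$\mathbb{E}_\pi c_2^{(n)}(\theta)=\big(\alpha_{=}(\beta)+\alpha_{\neq}(\beta)\big)\nabla^2L\nabla L+\Big(\alpha_{=}(\beta)\frac{N-1}{2(NB-1)}-\alpha_{\neq}(\beta)\frac{1}{2(NB-1)}\Big)\nabla\operatorname{tr}\Sigma,$$ where $$\alpha_{=}(\beta)=-\frac{\beta[1-\beta^n(1+\beta)+\beta^{2n+1}]}{(1-\beta)^2(1+\beta)},\qquad\alpha_{\neq}(\beta)=\frac{-2\beta^2+2n(1-\beta^2)\beta^{n+1}+2\beta^{2n+2}}{(1-\beta)^3(1+\beta)}.$$ Consequently $$\mathbb{E}_\pi c_2^{(n)}=\Big(-\frac{\beta}{(1-\beta)^3}+o_n(1)\Big)\nabla^2L\nabla L+\Big(-\frac{\beta}{2(1-\beta)^2(1+\beta)}+o_n(1)\Big)\frac{\nabla\operatorname{tr}\Sigma}{B},$$ where the $o_n(1)$ terms are scalars (depending on $\beta,n,B$) tending to $0$ as $n\to\infty$ for fixed $\beta$, uniformly in $B\in[1,n+1]$.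
   Context: Fix $\beta\in(0,1)$. Mini-batch losses: $L^{(k)}(\theta)=\frac1B\sum_{r=kB+1}^{kB+B}\ell_{\pi(r)}(\theta)$ for $k\in[0,n]$; full loss $L=\frac1{NB}\sum_{s}\ell_s$; $\Sigma_{ij}=\frac1{NB}\sum_{p=1}^{NB}\partial_i(\ell_p-L)\partial_j(\ell_p-L)$ is the empirical covariance of per-sample gradients. The second memoryless iteration coefficient of mini-batch heavy-ball momentum is $$c_2^{(n)}(\theta)=-\beta\sum_{b=0}^{n-1}\beta^b\sum_{l'=1}^{b+1}\sum_{b'=0}^{n-l'}\beta^{b'}\nabla^2L^{(n-1-b)}(\theta)\nabla L^{(n-l'-b')}(\theta).$$ $\mathbb{E}_\pi$ is the expectation over $\pi$. *)

From HB Require Import structures.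
From mathcomp Require Import all_boot all_order all_algebra all_fingroup.
From mathcomp Require Import all_classical all_reals all_analysis.
Set Implicit Arguments. Unset Strict Implicit. Unset Printing Implicit Defensive.
Import Order.TTheory GRing.Theory Num.Theory.
Import numFieldNormedType.Exports.
Local Open Scope ring_scope.

Section Defs.
Variables (R : realType) (d : nat).
Notation V := 'cV[R]_d.

Definition partial (i : 'I_d) (f : V -> R) (x : V) : R :=
  'D_(delta_mx i 0 : V) f x.

Definition grad (f : V -> R) (x : V) : V := \col_i partial i f x.
Definition hess (f : V -> R) (x : V) : 'M[R]_d :=
  \matrix_(i, j) partial i (partial j f) x.

Definition twice_differentiable (f : V -> R) : Prop :=
  (forall x, differentiable f x) /\ (forall j x, differentiable (partial j f) x).

Variable M : nat. (* total number of samples, M = N * B *)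

Definition fullL (l : 'I_M -> V -> R) : V -> R :=
  fun x => (M%:R)^-1 * \sum_(s < M) l s x.

(* mini-batch loss L^(k) (samples 0-indexed: batch k is r in [kB, kB+B)) *)
Definition batchL (B : nat) (l : 'I_M -> V -> R) (pi : 'S_M) (k : nat) : V -> R :=
  fun x => (B%:R)^-1 * \sum_(r < M | (k * B <= r)%N && (r < k * B + B)%N) l (pi r) x.

Definition Sigma (l : 'I_M -> V -> R) (x : V) : 'M[R]_d :=
  \matrix_(i, j) ((M%:R)^-1 * \sum_(p < M)
     partial i (fun y => l p y - fullL l y) x * partial j (fun y => l p y - fullL l y) x).

Definition trSigma (l : 'I_M -> V -> R) : V -> R := fun x => \tr (Sigma l x).

Definition Epi (F : 'S_M -> V) : V := ((M`!)%:R)^-1 *: \sum_(pi : 'S_M) F pi.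

End Defs.

(* second memoryless iteration coefficient of mini-batch heavy-ball momentum *)
Definition c2 (R : realType) (d : nat) (beta : R) (n B : nat)
    (l : 'I_(n.+1 * B) -> 'cV[R]_d -> R) (pi : 'S_(n.+1 * B)) (x : 'cV[R]_d) : 'cV[R]_d :=
  - beta *: \sum_(0 <= b < n) (beta ^+ b *:
      \sum_(1 <= l' < b.+2) \sum_(0 <= b' < (n - l').+1) (beta ^+ b' *:
         (hess (batchL B l pi (n - 1 - b)) x *m grad (batchL B l pi (n - l' - b')) x))).

Definition alpha_eq (R : realType) (beta : R) (n : nat) : R :=
  - (beta * (1 - beta ^+ n * (1 + beta) + beta ^+ (2 * n + 1)))
    / ((1 - beta) ^+ 2 * (1 + beta)).

Definition alpha_ne (R : realType) (beta : R) (n : nat) : R :=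
  (- 2 * beta ^+ 2 + 2 * n%:R * (1 - beta ^+ 2) * beta ^+ n.+1 + 2 * beta ^+ (2 * n + 2))
    / ((1 - beta) ^+ 3 * (1 + beta)).

From HB Require Import structures.
From mathcomp Require Import all_boot all_order all_algebra all_fingroup.
From mathcomp Require Import all_classical all_reals all_analysis.
From mathcomp Require Import ring lra zify.
Import Order.TTheory GRing.Theory Num.Theory.
Import numFieldNormedType.Exports.
Local Open Scope ring_scope.
Set Implicit Arguments. Unset Strict Implicit.

(* Since [c2] is a fixed linear combination of products [H^(a) g^(c)] of mini-batch
   Hessians and gradients, its expectation is the same combination of the expectations
   [E_pi[H^(a) g^(c)]].  Under a uniformly random permutation, [E[H_(pi r) g_(pi r')]] is
   the average of the diagonal products [H_s g_s] if [r = r'] and of the off-diagonal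
   products [H_s g_t] ([s <> t]) otherwise; centering the per-sample Hessians and
   gradients writes both as [Hf gf] plus a multiple of
   [grad tr Sigma = 2/M sum_p (H_p - Hf) (g_p - gf)], whence
   [E[H^(a) g^(c)] = Hf gf + ([a = c] N - 1) / (2 (N B - 1)) grad tr Sigma].
   Summing the momentum weights over all index pairs, resp. over the pairs with
   [a = c], gives [alpha_= + alpha_<>], resp. [alpha_=], by geometric sums.  These closed
   forms differ from their limits by [O(1/n + n beta^n)] uniformly in [B], which gives the
   asymptotic form. *)

(** * Derivatives of averaged losses *)

Section Calculus.
Variables (R : realType) (d : nat).
Notation V := 'cV[R]_d.

Lemma is_derive_big (I : Type) (s : seq I) (P : pred I) (f : I -> V -> R) (df : I -> R) x v :
  (forall r, is_derive x v (f r) (df r)) ->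
  is_derive x v (fun y => \sum_(r <- s | P r) f r y) (\sum_(r <- s | P r) df r).
Proof.
move=> hf; elim: s => [|r s IH].
  by under [fun y => _]funext do rewrite big_nil; rewrite big_nil; exact: is_derive_cst.
under [fun y => _]funext do rewrite big_cons; rewrite big_cons.
by case: (P r) => //; exact: is_deriveD.
Qed.

Lemma partialE (f : V -> R) i x df : is_derive x (delta_mx i 0) f df -> partial i f x = df.
Proof. by move=> h; rewrite /partial derive_val. Qed.

Lemma is_derive_partial (f : V -> R) i x :
  differentiable f x -> is_derive x (delta_mx i 0) f (partial i f x).
Proof. by move=> h; apply: derivableP; apply: diff_derivable. Qed.

Lemma partial_scaled_sum (I : Type) (s : seq I) (P : pred I) c (f : I -> V -> R) i :
  (forall r x, differentiable (f r) x) ->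
  partial i (fun x => c * \sum_(r <- s | P r) f r x) =
  fun x => c * \sum_(r <- s | P r) partial i (f r) x.
Proof.
move=> hf; apply/funext => x; apply: partialE; apply: is_deriveZ.
by apply: is_derive_big => r; exact: is_derive_partial.
Qed.

Lemma grad_scaled_sum (I : Type) (s : seq I) (P : pred I) c (f : I -> V -> R) x :
  (forall r x, differentiable (f r) x) ->
  grad (fun x => c * \sum_(r <- s | P r) f r x) x = c *: \sum_(r <- s | P r) grad (f r) x.
Proof.
move=> hf; apply/matrixP => i j; rewrite !mxE partial_scaled_sum // summxE.
by congr (_ * _); apply: eq_bigr => r _; rewrite mxE.
Qed.

Lemma hess_scaled_sum (I : Type) (s : seq I) (P : pred I) c (f : I -> V -> R) x :
  (forall r, twice_differentiable (f r)) ->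
  hess (fun x => c * \sum_(r <- s | P r) f r x) x = c *: \sum_(r <- s | P r) hess (f r) x.
Proof.
move=> hf; have hf1 r y : differentiable (f r) y by case: (hf r).
have hf2 r j y : differentiable (partial j (f r)) y by case: (hf r).
apply/matrixP => i j; rewrite !mxE !partial_scaled_sum // summxE.
by congr (_ * _); apply: eq_bigr => r _; rewrite mxE.
Qed.

Section LossFamily.
Variables (M : nat) (l : 'I_M -> V -> R).
Hypothesis hl : forall s, twice_differentiable (l s).

Let hl1 s x : differentiable (l s) x. Proof. by case: (hl s). Qed.
Let hl2 s j x : differentiable (partial j (l s)) x. Proof. by case: (hl s). Qed.

Lemma grad_fullL x : grad (fullL l) x = M%:R^-1 *: \sum_s grad (l s) x.
Proof. exact: grad_scaled_sum. Qed.

Lemma hess_fullL x : hess (fullL l) x = M%:R^-1 *: \sum_s hess (l s) x.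
Proof. exact: hess_scaled_sum. Qed.

Lemma grad_batchL B pi k x : grad (batchL B l pi k) x =
  B%:R^-1 *: \sum_(r < M | (k * B <= r < k * B + B)%N) grad (l (pi r)) x.
Proof. by apply: grad_scaled_sum => r; exact: hl1. Qed.

Lemma hess_batchL B pi k x : hess (batchL B l pi k) x =
  B%:R^-1 *: \sum_(r < M | (k * B <= r < k * B + B)%N) hess (l (pi r)) x.
Proof. by apply: hess_scaled_sum => r; exact: hl. Qed.

Lemma grad_trSigma x : grad (trSigma l) x = 2 * M%:R^-1 *:
  \sum_p ((hess (l p) x - hess (fullL l) x) *m (grad (l p) x - grad (fullL l) x)).
Proof.
pose u p i y := partial i (l p) y - M%:R^-1 * \sum_s partial i (l s) y.
pose du k p i := partial k (partial i (l p)) x - M%:R^-1 * \sum_s partial k (partial i (l s)) x.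
have u_centered p i : partial i (fun y => l p y - fullL l y) = u p i.
  apply/funext => y; apply: partialE; apply: is_deriveB; first exact: is_derive_partial.
  by apply: is_deriveZ; apply: is_derive_big => s; exact: is_derive_partial.
have is_derive_u k p i : is_derive x (delta_mx k 0) (u p i) (du k p i).
  apply: is_deriveB; first exact: is_derive_partial.
  by apply: is_deriveZ; apply: is_derive_big => s; exact: is_derive_partial.
have trE : trSigma l = fun y => \sum_i (M%:R^-1 * \sum_p (u p i y * u p i y)).
  apply/funext => y; rewrite /trSigma /mxtrace; apply: eq_bigr => i _.
  by rewrite mxE; under eq_bigr do rewrite u_centered.
have is_derive_u2 k p i : is_derive x (delta_mx k 0) (fun y => u p i y * u p i y)
    (u p i x * du k p i + u p i x * du k p i).
  exact: is_deriveM.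
have is_derive_tr k : is_derive x (delta_mx k 0) (trSigma l)
    (\sum_i (M%:R^-1 * \sum_p (u p i x * du k p i + u p i x * du k p i))).
  rewrite trE; apply: is_derive_big => i; apply: is_deriveZ.
  by apply: is_derive_big => p; exact: is_derive_u2.
apply/matrixP => k j; rewrite !mxE (partialE (is_derive_tr k)).
rewrite grad_fullL hess_fullL summxE mulr_sumr.
under [in LHS]eq_bigr => i _ do rewrite mulr_sumr.
rewrite exchange_big /=; apply: eq_bigr => p _; rewrite mxE mulr_sumr.
apply: eq_bigr => i _; rewrite /u /du !mxE !summxE.
under [X in _ = _ * ((_ - _ * X) * _)]eq_bigr do rewrite mxE.
under [X in _ = _ * (_ * (_ - _ * X))]eq_bigr do rewrite mxE.
ring.
Qed.

End LossFamily.
End Calculus.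

(** * Averages over random permutations *)

Lemma perm_two_transitive (T : finType) (r r' q q' : T) : r != r' -> q != q' ->
  exists sg : {perm T}, sg r = q /\ sg r' = q'.
Proof.
move=> hr hq; exists (tperm r q * tperm (tperm r q r') q')%g.
rewrite !permM tpermL; split; last by rewrite tpermL.
rewrite (@tpermD _ (tperm r q r') q' q) //; last by rewrite eq_sym.
by rewrite -[X in _ != X](tpermL r q) (inj_eq perm_inj) eq_sym.
Qed.

Section PermutationSums.
Variables (W : nmodType) (M : nat) (F : 'I_M -> 'I_M -> W).
Let S r r' := \sum_(pi : 'S_M) F (pi r) (pi r').

Let S_relabel (sg : 'S_M) r r' : S (sg r) (sg r') = S r r'.
Proof.
rewrite /S [RHS](reindex_inj (mulgI sg)) /=.
by apply: eq_bigr => pi _; rewrite !permM.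
Qed.

Lemma sum_perm_diag r : (\sum_(pi : 'S_M) F (pi r) (pi r)) *+ M = (\sum_s F s s) *+ M`!.
Proof.
have <- : \sum_q S q q = (\sum_s F s s) *+ M`!.
  rewrite /S exchange_big /= -card_Sn -sumr_const; apply: eq_bigr => pi _.
  by rewrite [RHS](reindex_inj (@perm_inj _ pi)).
transitivity (\sum_(q : 'I_M) S r r); first by rewrite sumr_const card_ord.
by apply: eq_bigr => q _; rewrite -(S_relabel (tperm r q)) tpermL.
Qed.

Lemma sum_perm_offdiag r r' : r != r' ->
  (\sum_(pi : 'S_M) F (pi r) (pi r')) *+ (M * M.-1) =
  (\sum_s \sum_(t | t != s) F s t) *+ M`!.
Proof.
move=> hr.
have <- : \sum_q \sum_(q' | q' != q) S q q' = (\sum_s \sum_(t | t != s) F s t) *+ M`!.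
  rewrite /S; under eq_bigr do rewrite exchange_big /=.
  rewrite exchange_big /= -card_Sn -sumr_const; apply: eq_bigr => pi _.
  rewrite [RHS](reindex_inj (@perm_inj _ pi)); apply: eq_bigr => q _.
  rewrite [RHS](reindex_inj (@perm_inj _ pi)); apply: eq_bigl => q'.
  by rewrite (inj_eq perm_inj).
transitivity (\sum_(q : 'I_M) \sum_(q' | q' != q) S r r').
  under [in RHS]eq_bigr => q _ do rewrite (sumr_const (predC1 q)) cardC1 card_ord.
  by rewrite sumr_const card_ord mulnC mulrnA.
apply: eq_bigr => q _; apply: eq_bigr => q' hq'.
have hq : q != q' by rewrite eq_sym.
by have [sg [<- <-]] := perm_two_transitive hr hq; rewrite S_relabel.
Qed.
End PermutationSums.

Section Expectation.
Variables (R : realType) (d M : nat).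
Notation V := 'cV[R]_d.

Lemma EpiZ c (F : 'S_M -> V) : Epi (fun pi => c *: F pi) = c *: Epi F.
Proof. by rewrite /Epi -scaler_sumr !scalerA mulrC. Qed.

Lemma Epi_sum (I : Type) (s : seq I) (P : pred I) (F : I -> 'S_M -> V) :
  Epi (fun pi => \sum_(i <- s | P i) F i pi) = \sum_(i <- s | P i) Epi (F i).
Proof. by rewrite /Epi exchange_big scaler_sumr. Qed.

Let scale_swap (a b : R) (X Y : V) : a != 0 -> b != 0 ->
  a *: X = b *: Y -> b^-1 *: X = a^-1 *: Y.
Proof.
move=> ha hb h; rewrite -(scalerK ha X) h !scalerA; congr (_ *: _).
by field; apply/andP.
Qed.

Lemma Epi_pair_diag (F : 'I_M -> 'I_M -> V) r :
  Epi (fun pi => F (pi r) (pi r)) = M%:R^-1 *: \sum_s F s s.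
Proof.
apply: scale_swap; rewrite ?pnatr_eq0 -?lt0n ?fact_gt0 //; first exact: leq_ltn_trans (ltn_ord r).
by rewrite !scaler_nat sum_perm_diag.
Qed.

Lemma Epi_pair_offdiag (F : 'I_M -> 'I_M -> V) r r' : r != r' ->
  Epi (fun pi => F (pi r) (pi r')) = (M * M.-1)%:R^-1 *: \sum_s \sum_(t | t != s) F s t.
Proof.
move=> hr; have hM : (1 < M)%N.
  by move: hr (ltn_ord r) (ltn_ord r'); rewrite -val_eqE /=; lia.
apply: scale_swap; rewrite ?pnatr_eq0 -?lt0n ?fact_gt0 ?muln_gt0 //; first by apply/andP; lia.
by rewrite !scaler_nat sum_perm_offdiag.
Qed.

End Expectation.

Section CenteredMoments.
Variables (R : numFieldType) (M m n p : nat).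
Variables (A : 'I_M -> 'M[R]_(m, n)) (v : 'I_M -> 'M[R]_(n, p)).
Local Notation Abar := (M%:R^-1 *: \sum_s A s).
Local Notation vbar := (M%:R^-1 *: \sum_s v s).
Local Notation C := (M%:R^-1 *: \sum_s ((A s - Abar) *m (v s - vbar))).
Hypothesis hM : (0 < M)%N.

Let hM0 : M%:R != 0 :> R. Proof. by rewrite pnatr_eq0 -lt0n. Qed.

Let sum_centered : \sum_s ((A s - Abar) *m (v s - vbar)) =
  \sum_s (A s *m v s) - M%:R *: (Abar *m vbar).
Proof.
under eq_bigr do rewrite mulmxBl !mulmxBr.
rewrite !sumrB -mulmx_suml -mulmx_sumr sumr_const card_ord -[(_ *m _) *+ _]scaler_nat.
rewrite -!scalemxAl -!scalemxAr !scalerA.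
move: ((\sum_s A s) *m (\sum_s v s)) (\sum_s (A s *m v s)) => P Q.
by apply/matrixP => i j; rewrite !mxE; field.
Qed.

Lemma mean_mul_diag : M%:R^-1 *: \sum_s (A s *m v s) = Abar *m vbar + C.
Proof. by rewrite sum_centered scalerBr scalerA mulVf // scale1r addrC subrK. Qed.

Lemma mean_mul_offdiag : (1 < M)%N ->
  (M * M.-1)%:R^-1 *: \sum_s \sum_(t | t != s) (A s *m v t) =
  Abar *m vbar - (M.-1)%:R^-1 *: C.
Proof.
move=> hM1; have hM10 : M.-1%:R != 0 :> R by rewrite pnatr_eq0 -lt0n; lia.
have offdiag s : \sum_(t | t != s) (A s *m v t) = A s *m \sum_t v t - A s *m v s.
  by rewrite [\sum_t v t](bigD1 s) //= mulmxDr addrC addKr mulmx_sumr.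
under eq_bigr do rewrite offdiag.
rewrite sumrB -mulmx_suml sum_centered.
have -> : (\sum_s A s) *m (\sum_t v t) = M%:R ^+ 2 *: (Abar *m vbar).
  by rewrite -scalemxAl -scalemxAr !scalerA -[LHS]scale1r; congr (_ *: _); field.
have hMpred : M.-1%:R = M%:R - 1 :> R by rewrite -[in RHS](prednK hM) -natr1 addrK.
apply/matrixP => i j; rewrite !mxE natrM hMpred.
by field; rewrite -hMpred hM10 hM0.
Qed.

End CenteredMoments.

Section BatchProducts.
Variables (R : realType) (d M : nat) (l : 'I_M -> 'cV[R]_d -> R).
Hypothesis hl : forall s, twice_differentiable (l s).

Lemma Epi_loss_pair x r r' : (1 < M)%N ->
  Epi (fun pi => hess (l (pi r)) x *m grad (l (pi r')) x) =
  hess (fullL l) x *m grad (fullL l) x +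
  (((r == r')%:R * M%:R - 1) / (2 * (M%:R - 1))) *: grad (trSigma l) x.
Proof.
move=> hM; have hM0 : M%:R != 0 :> R by rewrite pnatr_eq0 gtn_eqF // ltnW.
have hM1 : M%:R - 1 != 0 :> R by rewrite subr_eq0 pnatr_eq1 gtn_eqF.
rewrite grad_trSigma // hess_fullL // grad_fullL //.
pose F s t := hess (l s) x *m grad (l t) x.
case: eqP => [<-|/eqP hr].
  rewrite (Epi_pair_diag F) mean_mul_diag ?(ltnW hM) // scalerA.
  by congr (_ + _ *: _); rewrite /= mulr1n; field; apply/andP.
rewrite (Epi_pair_offdiag F) // mean_mul_offdiag ?(ltnW hM) // !scalerA -scaleNr.
have -> : M.-1%:R = M%:R - 1 :> R by rewrite -[in RHS](prednK (ltnW hM)) -natr1 addrK.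
by congr (_ + _ *: _); rewrite /= mul0r; field; apply/andP.
Qed.

End BatchProducts.

Lemma in_batch_unique (B a c r : nat) :
  (a * B <= r < a * B + B)%N -> (c * B <= r < c * B + B)%N -> a = c.
Proof. by move=> /andP [h1 h2] /andP [h3 h4]; nia. Qed.

Lemma sum_batchE (W : nmodType) (N B a : nat) (F : nat -> W) : (a < N)%N ->
  \sum_(r < N * B | (a * B <= r < a * B + B)%N) F r = \sum_(a * B <= r < a * B + B) F r.
Proof.
move=> ha; have hle : (a * B + B <= N * B)%N by rewrite addnC -mulSn leq_mul2r ha orbT.
rewrite [RHS](big_nat_widen _ _ _ _ _ hle) [RHS](big_nat_widenl _ _ _ _ _ (leq0n (a * B))).
rewrite -(big_mkord (fun r => (a * B <= r < a * B + B)%N)); apply: eq_bigl => r.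
by rewrite andbC.
Qed.

Lemma sum_batch_const (W : nmodType) (N B a : nat) (w : W) : (a < N)%N ->
  \sum_(r < N * B | (a * B <= r < a * B + B)%N) w = w *+ B.
Proof. by move=> ha; rewrite (@sum_batchE _ N B a (fun=> w)) // sumr_const_nat addKn. Qed.

Lemma sum_batch_pairs_eq (R : numDomainType) (N B a c : nat) : (a < N)%N -> (c < N)%N ->
  \sum_(r < N * B | (a * B <= r < a * B + B)%N)
    \sum_(r' < N * B | (c * B <= r' < c * B + B)%N) ((r == r')%:R : R) = (a == c)%:R * B%:R.
Proof.
move=> ha hc; rewrite -[B%:R](sum_batch_const _ _ ha) mulr_sumr; apply: eq_bigr => r hr.
rewrite (@sum_batchE _ N B c (fun r' => ((nat_of_ord r == r')%:R : R))) //.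
rewrite (eq_bigr (fun r' => if r' == nat_of_ord r then 1 else 0)); last first.
  by move=> r' _; rewrite eq_sym; case: eqP.
rewrite -big_mkcond big_nat1_eq mulr1.
case: ifP => [/(in_batch_unique hr) -> | hrc]; first by rewrite eqxx.
by case: eqP hr hrc => // <- ->.
Qed.

Lemma Epi_batch_product (R : realType) (d N B : nat) (l : 'I_(N * B) -> 'cV[R]_d -> R)
  (hl : forall s, twice_differentiable (l s)) (a c : nat) (x : 'cV[R]_d) :
  (1 < N * B)%N -> (a < N)%N -> (c < N)%N ->
  Epi (fun pi => hess (batchL B l pi a) x *m grad (batchL B l pi c) x) =
  hess (fullL l) x *m grad (fullL l) x +
  (((a == c)%:R * N%:R - 1) / (2 * ((N * B)%:R - 1))) *: grad (trSigma l) x.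
Proof.
move=> hM ha hc; set k := (2 * ((N * B)%:R - 1) : R)^-1.
have hB : B%:R != 0 :> R by rewrite pnatr_eq0 -lt0n; case: (B) hM; rewrite ?muln0.
have -> : (fun pi => hess (batchL B l pi a) x *m grad (batchL B l pi c) x) =
    (fun pi => (B%:R ^-2) *: \sum_(r < N * B | (a * B <= r < a * B + B)%N)
       \sum_(r' < N * B | (c * B <= r' < c * B + B)%N) hess (l (pi r)) x *m grad (l (pi r')) x).
  apply/funext => pi; rewrite hess_batchL // grad_batchL // -scalemxAl -scalemxAr scalerA.
  by rewrite -expr2 exprVn mulmx_suml; under eq_bigr do rewrite mulmx_sumr.
rewrite EpiZ Epi_sum.
under eq_bigr do rewrite Epi_sum; under eq_bigr do under eq_bigr do rewrite Epi_loss_pair //.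
under eq_bigr do rewrite big_split /= -scaler_suml (sum_batch_const _ _ hc).
rewrite big_split /= -scaler_suml (sum_batch_const _ _ ha) -mulrnA -[_ *+ (B * B)]scaler_nat.
have -> : \sum_(r < N * B | (a * B <= r < a * B + B)%N)
    \sum_(r' < N * B | (c * B <= r' < c * B + B)%N)
      (((r == r')%:R * (N * B)%:R - 1) / (2 * ((N * B)%:R - 1))) =
    ((a == c)%:R * B%:R * (N * B)%:R - (B * B)%:R) * k.
  under eq_bigr do rewrite -mulr_suml sumrB -mulr_suml sum_batch_const //.
  by rewrite -mulr_suml sumrB -mulr_suml sum_batch_pairs_eq // sum_batch_const // -mulrnA.
rewrite scalerDr !scalerA natrM; congr (_ + _ *: _).
  by rewrite -[RHS]scale1r; congr (_ *: _); field.
by rewrite natrM; field.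
Qed.

(** * Momentum weights *)

Definition momentum_sum (R : pzRingType) (W : lmodType R) (beta : R) (n : nat)
    (F : nat -> nat -> W) : W :=
  - beta *: \sum_(0 <= b < n) (beta ^+ b *:
      \sum_(1 <= l' < b.+2) \sum_(0 <= b' < (n - l').+1) (beta ^+ b' *: F (n - 1 - b)%N (n - l' - b')%N)).

Lemma c2E (R : realType) (d : nat) (beta : R) (n B : nat) (l : 'I_(n.+1 * B) -> 'cV[R]_d -> R) pi x :
  c2 beta l pi x =
  momentum_sum beta n (fun a c => hess (batchL B l pi a) x *m grad (batchL B l pi c) x).
Proof. by []. Qed.

Section MomentumSum.
Variables (R : realType) (W : lmodType R) (beta : R) (n : nat).

Lemma eq_momentum_sum (F G : nat -> nat -> W) :
  (forall a c, (a <= n)%N -> (c <= n)%N -> F a c = G a c) ->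
  momentum_sum beta n F = momentum_sum beta n G.
Proof.
move=> eqFG; congr (_ *: _); apply: eq_big_nat => b /andP [_ hb]; congr (_ *: _).
apply: eq_bigr => l' _; apply: eq_bigr => b' _; congr (_ *: _); apply: eqFG; lia.
Qed.

Lemma momentum_sumD (F G : nat -> nat -> W) :
  momentum_sum beta n (fun a c => F a c + G a c) = momentum_sum beta n F + momentum_sum beta n G.
Proof.
rewrite /momentum_sum -scalerDr -big_split /=; congr (_ *: _); apply: eq_bigr => b _.
rewrite -scalerDr -big_split /=; congr (_ *: _); apply: eq_bigr => l' _.
by rewrite -big_split /=; apply: eq_bigr => b' _; rewrite scalerDr.
Qed.

Lemma momentum_sumZl (f : nat -> nat -> R) (X : W) :
  momentum_sum beta n (fun a c => f a c *: X) = momentum_sum beta n f *: X.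
Proof.
rewrite /momentum_sum -scalerA scaler_suml; congr (_ *: _); apply: eq_bigr => b _.
rewrite -scalerA scaler_suml; congr (_ *: _); apply: eq_bigr => l' _.
by rewrite scaler_suml; apply: eq_bigr => b' _; rewrite scalerA.
Qed.

End MomentumSum.

Lemma Epi_momentum_sum (R : realType) (d M : nat) (beta : R) (n : nat)
    (F : 'S_M -> nat -> nat -> 'cV[R]_d) :
  Epi (fun pi => momentum_sum beta n (F pi)) =
  momentum_sum beta n (fun a c => Epi (fun pi => F pi a c)).
Proof.
rewrite /momentum_sum EpiZ Epi_sum; congr (_ *: _); apply: eq_bigr => b _.
rewrite EpiZ Epi_sum; congr (_ *: _); apply: eq_bigr => l' _.
rewrite Epi_sum; apply: eq_bigr => b' _; exact: EpiZ.
Qed.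

Lemma exprD_double (R : pzSemiRingType) (x : R) k i : x ^+ (2 * k + i) = (x ^+ k) ^+ 2 * x ^+ i.
Proof. by rewrite -exprM -exprD mulnC. Qed.

Section MomentumWeights.
Variables (R : realType) (be : R).
Local Notation geom m := (\sum_(i < m) be ^+ i).

Lemma geom_sumE m : (1 - be) * geom m = 1 - be ^+ m.
Proof. by rewrite -opprB mulNr -subrX1 opprB. Qed.

Lemma geom_sum_rev b : \sum_(1 <= l' < b.+2) be ^+ (b.+1 - l') = geom b.+1.
Proof.
rewrite big_add1 /= big_mkord (reindex_inj rev_ord_inj) /=; apply: eq_bigr => i _.
by rewrite subSS subKn // -ltnS.
Qed.

Let sum_diag_weight n : \sum_(0 <= b < n) be ^+ b * \sum_(1 <= l' < b.+2)
    \sum_(0 <= b' < (n - l').+1) be ^+ b' * ((n - 1 - b)%N == (n - l' - b')%N)%:R =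
  \sum_(b < n) be ^+ b * geom b.+1.
Proof.
rewrite big_mkord; apply: eq_bigr => b _; have hb := ltn_ord b.
rewrite -geom_sum_rev; congr (_ * _).
apply: eq_big_nat => l' /andP [hl1 hl2].
rewrite (eq_big_nat _ _ (F2 := fun b' => if b' == (b.+1 - l')%N then be ^+ b' else 0)).
  by rewrite -big_mkcond big_nat1_eq ifT //; apply/andP; lia.
move=> b' /andP [_ hb']; have -> : ((n - 1 - b)%N == (n - l' - b')%N) = (b' == (b.+1 - l')%N).
  by apply/eqP/eqP; lia.
by case: eqP; rewrite ?mulr1 ?mulr0.
Qed.

Let sum_total_weight n : (1 - be) * \sum_(0 <= b < n) be ^+ b * \sum_(1 <= l' < b.+2)
    \sum_(0 <= b' < (n - l').+1) be ^+ b' =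
  \sum_(b < n) b.+1%:R * be ^+ b - be ^+ n * \sum_(b < n) geom b.+1.
Proof.
rewrite big_mkord !mulr_sumr -sumrB; apply: eq_bigr => b _; have hb := ltn_ord b.
have inner : (1 - be) * \sum_(1 <= l' < b.+2) \sum_(0 <= b' < (n - l').+1) be ^+ b' =
    b.+1%:R - \sum_(1 <= l' < b.+2) be ^+ (n - l').+1.
  rewrite mulr_sumr (eq_bigr _ (fun l' _ => etrans (congr1 _ (big_mkord _ _)) (geom_sumE _))).
  by rewrite sumrB sumr_const_nat subn1.
have shift : be ^+ b * \sum_(1 <= l' < b.+2) be ^+ (n - l').+1 = be ^+ n * geom b.+1.
  rewrite -geom_sum_rev !mulr_sumr; apply: eq_big_nat => l' /andP [hl1 hl2].
  by rewrite -!exprD; congr (_ ^+ _); lia.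
by rewrite mulrCA inner mulrBr shift mulrC.
Qed.

Let sum_n_expr n : (\sum_(b < n) b.+1%:R * be ^+ b) * (1 - be) ^+ 2 =
  1 - n.+1%:R * be ^+ n + n%:R * be ^+ n.+1.
Proof.
elim: n => [|n IH]; first by rewrite big_ord0 mul0r expr0 mul1r mul0r subrr addr0.
rewrite big_ord_recr /= mulrDl IH !exprS -!natr1; ring.
Qed.

Let sum_geom n : (\sum_(b < n) geom b.+1) * (1 - be) ^+ 2 = n%:R * (1 - be) - be + be ^+ n.+1.
Proof.
elim: n => [|n IH]; first by rewrite big_ord0 mul0r mul0r sub0r expr1 addrC subrr.
rewrite big_ord_recr /= mulrDl IH.
have -> : geom n.+1 * (1 - be) ^+ 2 = (1 - be) * ((1 - be) * geom n.+1) by ring.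
rewrite geom_sumE !exprS -!natr1; ring.
Qed.

Let sum_expr_geom n : (\sum_(b < n) be ^+ b * geom b.+1) * ((1 - be) ^+ 2 * (1 + be)) =
  1 - be ^+ n - be ^+ n.+1 + be ^+ (2 * n + 1).
Proof.
elim: n => [|n IH]; first by rewrite big_ord0 mul0r muln0 expr0 expr1; ring.
rewrite big_ord_recr /= mulrDl IH.
have -> : be ^+ n * geom n.+1 * ((1 - be) ^+ 2 * (1 + be)) =
    be ^+ n * (1 - be) * (1 + be) * ((1 - be) * geom n.+1) by ring.
rewrite geom_sumE !exprD_double !exprS; ring.
Qed.

Hypotheses (hbe1 : 1 - be != 0) (hbe2 : 1 + be != 0).

Lemma momentum_sum_diag n : momentum_sum be n (fun a c => (a == c)%:R) = alpha_eq be n.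
Proof.
have -> : momentum_sum be n (fun a c => (a == c)%:R) = - be * \sum_(b < n) be ^+ b * geom b.+1.
  by rewrite -sum_diag_weight.
have hK : (1 - be) ^+ 2 * (1 + be) != 0 by rewrite mulf_neq0 ?expf_neq0.
rewrite -(mulfK hK (\sum_(b < n) _)) sum_expr_geom /alpha_eq exprD_double !exprS.
by field; rewrite hbe1 hbe2.
Qed.

Lemma momentum_sum1 n : momentum_sum be n (fun _ _ => 1) = alpha_eq be n + alpha_ne be n.
Proof.
have -> : momentum_sum be n (fun _ _ => 1) = - be * \sum_(0 <= b < n) be ^+ b *
    \sum_(1 <= l' < b.+2) \sum_(0 <= b' < (n - l').+1) be ^+ b'.
  by congr (_ * _); apply: eq_bigr => b _; congr (_ * _); apply: eq_bigr => l' _;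
     apply: eq_bigr => b' _; exact: mulr1.
rewrite -(mulKf hbe1 (\sum_(0 <= b < n) _)) sum_total_weight.
rewrite -(mulfK (expf_neq0 2 hbe1) (\sum_(b < n) _ * _)) sum_n_expr.
rewrite -(mulfK (expf_neq0 2 hbe1) (\sum_(b < n) geom b.+1)) sum_geom.
rewrite /alpha_eq /alpha_ne !exprD_double !exprS -!natr1.
by field; rewrite hbe1 hbe2.
Qed.

End MomentumWeights.

Lemma Epi_c2 (R : realType) (beta : R) (n B d : nat) (l : 'I_(n.+1 * B) -> 'cV[R]_d -> R)
    (theta : 'cV[R]_d) :
  1 - beta != 0 -> 1 + beta != 0 -> (1 <= n)%N -> (1 <= B)%N ->
  (forall s, twice_differentiable (l s)) ->
  Epi (fun pi => c2 beta l pi theta) =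
    (alpha_eq beta n + alpha_ne beta n) *: (hess (fullL l) theta *m grad (fullL l) theta)
    + (alpha_eq beta n * n%:R / (2 * ((n.+1 * B)%:R - 1))
       - alpha_ne beta n / (2 * ((n.+1 * B)%:R - 1))) *: grad (trSigma l) theta.
Proof.
move=> hb1 hb2 hn hB hl; have hM : (1 < n.+1 * B)%N by nia.
set X := _ *m _; set T := grad _ _; set k := (2 * _)^-1.
under eq_fun do rewrite c2E; rewrite Epi_momentum_sum.
rewrite (@eq_momentum_sum _ _ beta n _ (fun a c =>
    1 *: X + ((a == c)%:R *: (n.+1%:R * k *: T) + 1 *: (- k *: T)))); last first.
  move=> a c ha hc; rewrite Epi_batch_product // ?ltnS // scale1r !scalerA -scalerDl.
  by congr (_ + _ *: _); rewrite /k; ring.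
rewrite !momentum_sumD !momentum_sumZl momentum_sum1 // momentum_sum_diag //.
rewrite !scalerA -scalerDl; congr (_ + _ *: _); rewrite /k -natr1; ring.
Qed.

(** * Asymptotics *)

Lemma binomial_term_le (R : numDomainType) (x : R) n : 0 <= x ->
  x ^+ 2 *+ 'C(n, 2) <= (1 + x) ^+ n.
Proof.
move=> hx; have term_ge0 i : 0 <= x ^+ i *+ 'C(n, i) by rewrite mulrn_wge0 ?exprn_ge0.
rewrite addrC exprD1n; case: (ltnP n 2) => hn.
  by rewrite bin_small // mulr0n sumr_ge0.
by rewrite (bigD1 (Ordinal (hn : (2 < n.+1)%N))) //= lerDl sumr_ge0.
Qed.

Lemma exists_nat_gt (R : realType) (x : R) : exists k : nat, forall n, (k <= n)%N -> x < n%:R.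
Proof.
have [k hk] : exists k : nat, `|x| < k%:R by exists (Num.Def.archi_bound `|x|); exact: archi_boundP.
exists k => n hn; apply: le_lt_trans (ler_norm x) _.
by apply: lt_le_trans hk _; rewrite ler_nat.
Qed.

Section Asymptotics.
Variables (R : realType) (be : R).
Hypothesis hbe : 0 < be < 1.

Lemma n_mul_expr_lt (delta : R) : 0 < delta ->
  exists k : nat, forall n, (k <= n)%N -> n%:R * be ^+ n < delta.
Proof.
move=> hd; case/andP: hbe => hb0 hb1; set x := (1 - be) / be.
(* [(1 + x) be = 1], so the binomial bound [x^2 C(n, 2) <= (1 + x)^n] reads
   [n (n - 1) x^2 be^n <= 2]. *)
have hx : 0 < x by rewrite divr_gt0 //; lra.
have hxb : (1 + x) * be = 1 by rewrite /x mulrDl mul1r mulfVK ?gt_eqF //; ring.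
have [k hk] := exists_nat_gt (2 / (delta * x ^+ 2) + 1).
exists k => n /hk hn.
have hq : 0 < 2 / (delta * x ^+ 2) by rewrite divr_gt0 // mulr_gt0 // exprn_gt0.
have hn2 : (2 <= n)%N by rewrite -(ltr_nat R); lra.
have binom : n%:R * n.-1%:R * x ^+ 2 * be ^+ n <= 2.
  have := binomial_term_le n (ltW hx).
  rewrite -(ler_pM2r (exprn_gt0 n hb0)) -exprMn hxb expr1n -mulr_natr => h.
  rewrite -natrM (_ : (n * n.-1 = 2 * 'C(n, 2))%N) ?natrM; first lra.
  by rewrite -mul_bin_diag bin1.
have hn1 : n.-1%:R = n%:R - 1 :> R by rewrite -[in RHS](ltn_predK hn2) -natr1 addrK.
have hpos : 0 < n.-1%:R * x ^+ 2 by rewrite mulr_gt0 ?exprn_gt0 // hn1; lra.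
have hc : 0 < delta * x ^+ 2 by rewrite mulr_gt0 ?exprn_gt0.
have hlt : 2 < n.-1%:R * x ^+ 2 * delta.
  have h2 : 2 / (delta * x ^+ 2) * (delta * x ^+ 2) = 2 by rewrite mulfVK ?gt_eqF.
  have := hn; rewrite -(ltr_pM2r hc) hn1 => h; lra.
by rewrite -(ltr_pM2l hpos); lra.
Qed.

Definition alpha_sum_error n : R := alpha_eq be n + alpha_ne be n + be / (1 - be) ^+ 3.

Definition trace_coef_error n B : R :=
  B%:R * (alpha_eq be n * n%:R / (2 * ((n.+1 * B)%:R - 1))
          - alpha_ne be n / (2 * ((n.+1 * B)%:R - 1)))
  + be / (2 * (1 - be) ^+ 2 * (1 + be)).

Let one_sub_neq0 : 1 - be != 0. Proof. by case/andP: hbe => ? ?; apply/eqP; lra. Qed.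
Let one_add_neq0 : 1 + be != 0. Proof. by case/andP: hbe => ? ?; apply/eqP; lra. Qed.

Lemma alpha_sum_error_bound n : (1 <= n)%N ->
  `|alpha_sum_error n| <= 4 * (n%:R * be ^+ n) / (1 - be) ^+ 3.
Proof.
move=> hn; case/andP: hbe => hb0 hb1.
have hK : 0 < (1 - be) ^+ 3 by rewrite exprn_gt0 // subr_gt0.
have -> : alpha_sum_error n =
    ((2 * n%:R + 1) * ((1 - be) * be) * be ^+ n + be ^+ 2 * be ^+ n * be ^+ n) / (1 - be) ^+ 3.
  by rewrite /alpha_sum_error /alpha_eq /alpha_ne !exprD_double !exprS; field;
    rewrite one_sub_neq0 one_add_neq0.
have hn1 : 1 <= n%:R :> R by rewrite ler1n.
have [hx0 hx1] : 0 <= be ^+ n /\ be ^+ n <= 1 by rewrite exprn_ge0 ?exprn_ile1 // ltW.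
have [hq0 hq1] : 0 <= (1 - be) * be /\ (1 - be) * be <= 1 by split; nra.
have [hb20 hb21] : 0 <= be ^+ 2 /\ be ^+ 2 <= 1 by rewrite exprn_ge0 ?exprn_ile1 // ltW.
set x := be ^+ n in hx0 hx1 *; set q := (1 - be) * be in hq0 hq1 *.
have h1 : 0 <= (2 * n%:R + 1) * q * x <= (2 * n%:R + 1) * x.
  apply/andP; split; first by apply: mulr_ge0 => //; apply: mulr_ge0; lra.
  by rewrite -mulrA ler_wpM2l ?ler_piMl //; lra.
have h2 : 0 <= be ^+ 2 * x * x <= x.
  apply/andP; split; first by apply: mulr_ge0 => //; apply: mulr_ge0.
  by apply: ler_piMl => //; apply: mulr_ile1.
rewrite normrM normfV !ger0_norm ?(ltW hK) //; last lra.
rewrite ler_pM2r ?invr_gt0 //; nra.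
Qed.

Let numer_pos B : R := (B%:R - 1) * ((1 - be) * be) + 2 * B%:R * be ^+ 2.
Let numer_neg n B : R :=
  B%:R * n%:R * be ^+ n * (be * (1 - be ^+ 2) + be ^+ 2 * (1 - be) * be ^+ n)
  + 2 * B%:R * be ^+ 2 * be ^+ n * be ^+ n.

Let trace_coef_errorE n B : (1 <= n)%N -> (1 <= B)%N -> trace_coef_error n B =
  (numer_pos B - numer_neg n B) / (2 * ((n%:R + 1) * B%:R - 1) * ((1 - be) ^+ 3 * (1 + be))).
Proof.
move=> hn hB; have [hm hb] : 1 <= n%:R :> R /\ 1 <= B%:R :> R by rewrite !ler1n.
have hM : (n%:R + 1) * B%:R - 1 != 0 :> R by apply/eqP; nra.
rewrite /trace_coef_error /alpha_eq /alpha_ne /numer_pos /numer_neg natrM -[n.+1%:R]natr1.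
by rewrite !exprD_double !exprS; field; rewrite one_sub_neq0 one_add_neq0 hM.
Qed.

Let numer_bound n B : (1 <= B)%N ->
  `|numer_pos B - numer_neg n B| <= 3 * B%:R + 2 * (B%:R * n%:R * be ^+ n).
Proof.
move=> hB; case/andP: hbe => hb0 hb1; have hb : 1 <= B%:R :> R by rewrite ler1n.
have [hx0 hx1] : 0 <= be ^+ n /\ be ^+ n <= 1 by rewrite exprn_ge0 ?exprn_ile1 // ltW.
have [hb20 hb21] : 0 <= be ^+ 2 /\ be ^+ 2 <= 1 by rewrite exprn_ge0 ?exprn_ile1 // ltW.
have [hq0 hq1] : 0 <= (1 - be) * be /\ (1 - be) * be <= 1 by split; nra.
have [hr0 hr1] : 0 <= be * (1 - be ^+ 2) + be ^+ 2 * (1 - be) * be ^+ n /\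
                 be * (1 - be ^+ 2) + be ^+ 2 * (1 - be) * be ^+ n <= 2.
  have [h10 h11] : 0 <= be * (1 - be ^+ 2) /\ be * (1 - be ^+ 2) <= 1 by rewrite expr2; split; nra.
  have [h20 h21] : 0 <= be ^+ 2 * (1 - be) * be ^+ n /\ be ^+ 2 * (1 - be) * be ^+ n <= 1.
    by split; [apply: mulr_ge0 | apply: mulr_ile1]; rewrite ?mulr_ge0 ?mulr_ile1 //; lra.
  by split; lra.
have [hbx0 hbx1] : 0 <= be ^+ 2 * be ^+ n * be ^+ n /\ be ^+ 2 * be ^+ n * be ^+ n <= 1.
  have h0 : 0 <= be ^+ 2 * be ^+ n by apply: mulr_ge0.
  by split; [apply: mulr_ge0 | apply: mulr_ile1 => //; apply: mulr_ile1].
have hbnx : 0 <= B%:R * n%:R * be ^+ n by rewrite !mulr_ge0 //; lra.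
have [hB1 hB2] : 0 <= B%:R - 1 :> R /\ 0 <= 2 * B%:R :> R by split; lra.
have := ler_piMr hB1 hq1; have := mulr_ge0 hB1 hq0.
have := ler_piMr hB2 hb21; have := mulr_ge0 hB2 hb20.
have := mulr_ge0 hbnx hr0; have := ler_wpM2l hbnx hr1.
have := mulr_ge0 hB2 hbx0; have := ler_piMr hB2 hbx1.
rewrite /numer_pos /numer_neg => *; apply/ler_normlP; split; lra.
Qed.

Lemma trace_coef_error_bound n B : (1 <= n)%N -> (1 <= B)%N ->
  `|trace_coef_error n B| <= (3 * n%:R^-1 + 2 * be ^+ n) / (2 * ((1 - be) ^+ 3 * (1 + be))).
Proof.
move=> hn hB; case/andP: hbe => hb0 hb1.
have [hm hb] : 1 <= n%:R :> R /\ 1 <= B%:R :> R by rewrite !ler1n.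
have hK : 0 < (1 - be) ^+ 3 * (1 + be) by rewrite mulr_gt0 ?exprn_gt0 //; lra.
rewrite trace_coef_errorE //; set K := (1 - be) ^+ 3 * (1 + be) in hK *.
have hD0 : 0 < 2 * (n%:R * B%:R) * K by rewrite !mulr_gt0 //; lra.
have hD : 2 * (n%:R * B%:R) * K <= 2 * ((n%:R + 1) * B%:R - 1) * K.
  by rewrite ler_pM2r // ler_pM2l //; lra.
have -> : (3 * n%:R^-1 + 2 * be ^+ n) / (2 * K) =
    (3 * B%:R + 2 * (B%:R * n%:R * be ^+ n)) / (2 * (n%:R * B%:R) * K).
  by field; apply/and3P; split; apply/eqP; lra.
have hD1 := lt_le_trans hD0 hD.
rewrite normrM normfV (gtr0_norm hD1).
by apply: ler_pM; [exact: normr_ge0 | rewrite invr_ge0 ltW | exact: numer_bound |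
  rewrite lef_pV2 ?posrE].
Qed.

Lemma error_terms_small (eps : R) : 0 < eps -> exists n0 : nat, forall n B : nat,
  (n0 <= n)%N -> (1 <= B <= n.+1)%N -> `|alpha_sum_error n| < eps /\ `|trace_coef_error n B| < eps.
Proof.
move=> he; case/andP: hbe => hb0 hb1.
have hc : 0 < (1 - be) ^+ 3 by rewrite exprn_gt0 // subr_gt0.
set delta := eps * (1 - be) ^+ 3 / 8.
have hec : 0 < eps * (1 - be) ^+ 3 by apply: mulr_gt0.
have hd : 0 < delta by apply: divr_gt0.
have [k1 hk1] := n_mul_expr_lt hd; have [k2 hk2] := exists_nat_gt delta^-1.
exists (maxn 1 (maxn k1 k2)) => n B; rewrite !geq_max => /and3P [hn /hk1 hnx /hk2 hnd].
case/andP => hB _; have hn0 : 0 < n%:R :> R by rewrite ltr0n.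
have hinv : n%:R^-1 < delta by rewrite -[delta]invrK ltf_pV2 ?posrE ?invr_gt0.
have hx : be ^+ n <= n%:R * be ^+ n by rewrite ler_peMl ?exprn_ge0 ?ler1n // ltW.
split.
  apply: le_lt_trans (alpha_sum_error_bound hn) _.
  by rewrite ltr_pdivrMr // /delta in hnx *; lra.
apply: le_lt_trans (trace_coef_error_bound hn hB) _.
have hK : (1 - be) ^+ 3 <= (1 - be) ^+ 3 * (1 + be) by rewrite ler_peMr ?ltW //; lra.
have heK := ler_wpM2l (ltW he) hK.
rewrite ltr_pdivrMr ?mulr_gt0 ?exprn_gt0 ?subr_gt0 //; last lra.
by rewrite /delta in hnx hinv; lra.
Qed.

End Asymptotics.

Theorem mainTheorem14 (R : realType) (beta : R) (hbeta : 0 < beta < 1) :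
  (forall (n B d : nat), (1 <= n)%N -> (1 <= B <= n.+1)%N ->
   forall (l : 'I_(n.+1 * B) -> 'cV[R]_d -> R),
   (forall s, twice_differentiable (l s)) ->
   forall theta : 'cV[R]_d,
   Epi (fun pi => c2 beta l pi theta) =
     (alpha_eq beta n + alpha_ne beta n) *:
        (hess (fullL l) theta *m grad (fullL l) theta)
     + (alpha_eq beta n * n%:R / (2 * ((n.+1 * B)%:R - 1))
        - alpha_ne beta n / (2 * ((n.+1 * B)%:R - 1))) *:
        grad (trSigma l) theta)
  /\
  (exists e1 e2 : nat -> nat -> R,
     (forall eps : R, 0 < eps -> exists n0 : nat, forall n B : nat,
        (n0 <= n)%N -> (1 <= B <= n.+1)%N -> `|e1 n B| < eps /\ `|e2 n B| < eps)
     /\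
     (forall (n B d : nat), (1 <= n)%N -> (1 <= B <= n.+1)%N ->
      forall (l : 'I_(n.+1 * B) -> 'cV[R]_d -> R),
      (forall s, twice_differentiable (l s)) ->
      forall theta : 'cV[R]_d,
      Epi (fun pi => c2 beta l pi theta) =
        (- beta / (1 - beta) ^+ 3 + e1 n B) *:
           (hess (fullL l) theta *m grad (fullL l) theta)
        + (- beta / (2 * (1 - beta) ^+ 2 * (1 + beta)) + e2 n B) *:
           ((B%:R)^-1 *: grad (trSigma l) theta))).
Proof.
have [hb1 hb2] : 1 - beta != 0 /\ 1 + beta != 0.
  by case/andP: hbeta => h0 h1; split; apply/eqP; lra.
split=> [n B d hn /andP [hB _] l hl theta|]; first exact: Epi_c2.
exists (fun n _ => alpha_sum_error beta n), (trace_coef_error beta).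
split=> [|n B d hn /andP [hB _] l hl theta]; first exact: error_terms_small.
have hB0 : B%:R != 0 :> R by rewrite pnatr_eq0 -lt0n.
rewrite Epi_c2 // scalerA; congr (_ *: _ + _ *: _).
  by rewrite /alpha_sum_error; field.
have [hn1 hB1] : 1 <= n%:R :> R /\ 1 <= B%:R :> R by rewrite !ler1n.
by rewrite /trace_coef_error; field; rewrite hB0 hb1 hb2; apply/eqP; nra.
Qed.
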